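(* Let $t>0$ and $k>1$ be constants, and let $p_0,p_1,p_2,p_3$ be real numbers with $0<p_i<1$ and $\sum_{i=0}^{3}p_i=1$. Define $T(n,r)$ for real $n\ge 0$ and integers $r\ge 0$ by $$T(n,r)=\begin{cases}1 & \text{if } n\le t k^r,\\ 1+\sum_{i=0}^{3} T\big(p_i(n-tk^r),\,r+1\big) & \text{if } n> t k^r.\end{cases}$$ Then, as $N\to\infty$, $T(N,0)\in\Theta(N^s)$, where $s$ is the real solution of $\sum_{i=0}^{3}p_i^s=k^s$.
   Context: $T(N,0)$ is the asymptotic space (number of counters) used by a DN-tree with parameters $k$ and $t$ after recording $N$ extent accesses: a tree vertex at level $r$ saturates at threshold $tk^r$, after which further accesses are distributed among its four children with probabilities $p_0,\dots,p_3$ (an R-MAT-type distribution). The parameters $t,k,p_i$ are fixed as $N\to\infty$. *)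

From Stdlib Require Import Reals.
Open Scope R_scope.

Definition DN_space (t k : R) (p : nat -> R) (T : R -> nat -> R) : Prop :=
  forall (n : R) (r : nat), 0 <= n ->
    (n <= t * k ^ r -> T n r = 1) /\
    (t * k ^ r < n ->
       T n r = 1 + sum_f_R0 (fun i => T (p i * (n - t * k ^ r)) (S r)) 3).

From Stdlib Require Import Reals Lra Lia.
Open Scope R_scope.

(* Measure a vertex of level r holding n accesses by its normalised size
   m = n / k^r. A child of a saturated vertex has normalised size q_i (m - t)
   with q_i = p_i / k, and the exponent s makes sum_i q_i^s = 1. Hence
   x |-> x^s is additive over the children up to the shifts by t, and
   absorbing these shifts into a constant (m + c for the upper bound,
   m + d for the lower one) turns the recursion into the invariants
   a (m + d)^s <= T(n, r) <= A (m + c)^s - 1, proved by induction along the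
   tree. At the root m = N, which gives T(N, 0) = Theta(N^s). *)

Lemma Rpower_pos (x y : R) : 0 < Rpower x y.
Proof. apply exp_pos. Qed.

Lemma ex_pos_lower_bound (f : nat -> R) (M : nat) :
  (forall i, (i <= M)%nat -> 0 < f i) ->
  exists c, 0 < c /\ forall i, (i <= M)%nat -> c <= f i.
Proof.
  induction M as [|M IH]; intros Hf.
  - exists (f 0%nat); split; [apply Hf; lia|].
    intros i Hi; replace i with 0%nat by lia; lra.
  - destruct IH as [c [Hc Hcf]]; [intros i Hi; apply Hf; lia|].
    exists (Rmin c (f (S M))); split.
    + apply Rmin_glb_lt; [lra | apply Hf; lia].
    + intros i Hi; destruct (Nat.eq_dec i (S M)) as [->|Hne].
      * apply Rmin_r.
      * eapply Rle_trans; [apply Rmin_l | apply Hcf; lia].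
Qed.

Lemma Rpower_exponent_nonneg (k s : R) (M : nat) (p : nat -> R) :
  1 < k -> (forall i, (i <= M)%nat -> 0 < p i < 1) ->
  sum_f_R0 (fun i => Rpower (p i) s) M = Rpower k s -> 0 <= s.
Proof.
  intros Hk Hp Hsum; apply Rnot_lt_le; intros Hs.
  assert (Hks : Rpower k s < 1) by (rewrite <- (Rpower_O k); [apply Rpower_lt|]; lra).
  assert (Hps : forall i, (i <= M)%nat -> 1 <= Rpower (p i) s).
  { intros i Hi; destruct (Hp i Hi) as [Hp0 Hp1].
    assert (Hln : ln (p i) < 0) by (rewrite <- ln_1; apply ln_increasing; lra).
    unfold Rpower; pose proof (exp_ineq1_le (s * ln (p i))); nra. }
  pose proof (sum_Rle (fun _ => 1) _ M Hps) as Hsum1.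
  rewrite Hsum, sum_cte, S_INR in Hsum1; pose proof (pos_INR M); lra.
Qed.

Lemma sum_Rpower_div_eq1 (k s : R) (M : nat) (p : nat -> R) :
  0 < k -> (forall i, (i <= M)%nat -> 0 < p i) ->
  sum_f_R0 (fun i => Rpower (p i) s) M = Rpower k s ->
  sum_f_R0 (fun i => Rpower (p i / k) s) M = 1.
Proof.
  intros Hk Hp Hsum.
  assert (Hdiv : forall i, (i <= M)%nat ->
    Rpower (p i / k) s = Rpower (p i) s * / Rpower k s).
  { intros i Hi; unfold Rdiv; rewrite <- Rpower_mult_distr, <- Rpower_Ropp;
      [| apply Hp, Hi | apply Rinv_0_lt_compat, Hk].
    unfold Rpower; rewrite ln_Rinv by exact Hk; f_equal; f_equal; ring. }
  rewrite (sum_eq _ _ _ Hdiv), <- scal_sum, Rmult_comm, Hsum.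
  apply Rinv_r, Rgt_not_eq, Rpower_pos.
Qed.

Section DNTree.

Variables (t k : R) (M : nat) (p : nat -> R).
Hypothesis t_pos : 0 < t.
Hypothesis k_gt1 : 1 < k.
Hypothesis p_range : forall i, (i <= M)%nat -> 0 < p i < 1.

(* Each saturation removes at least t accesses, so the induction runs on the
   number of multiples of t below n. *)
Lemma dn_tree_ind (P : R -> nat -> Prop) :
  (forall n r, 0 <= n -> n <= t * k ^ r -> P n r) ->
  (forall n r, 0 <= n -> t * k ^ r < n ->
     (forall i, (i <= M)%nat -> P (p i * (n - t * k ^ r)) (S r)) -> P n r) ->
  forall n r, 0 <= n -> P n r.
Proof.
  intros Hleaf Hnode.
  assert (Htk : forall r, t <= t * k ^ r).
  { intros r; pose proof (pow_R1_Rle k r); nra. }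
  assert (Hj : forall j n r, 0 <= n -> n <= INR j * t -> P n r).
  { induction j as [|j IH]; intros n r Hn Hnj.
    - apply Hleaf; [exact Hn|]; simpl in Hnj; pose proof (Htk r); lra.
    - destruct (Rle_lt_dec n (t * k ^ r)) as [Hle|Hlt]; [apply Hleaf; assumption|].
      apply Hnode; [exact Hn | exact Hlt |]; intros i Hi.
      destruct (p_range i Hi); pose proof (Htk r); rewrite S_INR in Hnj.
      apply IH; nra. }
  intros n r Hn; destruct (INR_archimed t n) as [j Hj']; [lra|].
  apply (Hj j); lra.
Qed.

Lemma child_normalised_size (n : R) (r : nat) (i : nat) :
  p i * (n - t * k ^ r) / k ^ S r = p i / k * (n / k ^ r - t).
Proof.
  assert (0 < k ^ r) by (apply pow_lt; lra).
  simpl; field; lra.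
Qed.

Variables (s : R) (T : R -> nat -> R).
Hypothesis s_ge0 : 0 <= s.
Hypothesis sum_scaled_Rpower : sum_f_R0 (fun i => Rpower (p i / k) s) M = 1.
Hypothesis T_leaf : forall n r, 0 <= n -> n <= t * k ^ r -> T n r = 1.
Hypothesis T_node : forall n r, 0 <= n -> t * k ^ r < n ->
  T n r = 1 + sum_f_R0 (fun i => T (p i * (n - t * k ^ r)) (S r)) M.

Lemma sum_Rpower_scaled (x : R) :
  0 < x -> sum_f_R0 (fun i => Rpower (p i / k * x) s) M = Rpower x s.
Proof.
  intros Hx.
  assert (Hsplit : forall i, (i <= M)%nat ->
    Rpower (p i / k * x) s = Rpower (p i / k) s * Rpower x s).
  { intros i Hi; destruct (p_range i Hi).
    rewrite Rpower_mult_distr; [reflexivity | | exact Hx].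
    apply Rdiv_lt_0_compat; lra. }
  rewrite (sum_eq _ _ _ Hsplit), <- scal_sum, sum_scaled_Rpower; ring.
Qed.

Lemma normalised_size_nonneg (n : R) (r : nat) : 0 <= n -> 0 <= n / k ^ r.
Proof.
  intros Hn; unfold Rdiv; apply Rmult_le_pos; [exact Hn|].
  left; apply Rinv_0_lt_compat, pow_lt; lra.
Qed.

Lemma normalised_size_le (n : R) (r : nat) : n <= t * k ^ r <-> n / k ^ r <= t.
Proof.
  assert (Hkr : 0 < k ^ r) by (apply pow_lt; lra).
  split; intros H.
  - apply (Rmult_le_reg_r (k ^ r)); [exact Hkr|]; field_simplify; lra.
  - apply (Rmult_le_compat_r (k ^ r)) in H; [|lra]; field_simplify in H; lra.
Qed.

(* The slack -1 of each child pays for the +1 of its parent, which is why at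
   least two children are needed. *)
Lemma dn_upper_invariant (A c : R) :
  (1 <= M)%nat -> 0 < c -> 2 <= A * Rpower c s ->
  (forall i, (i <= M)%nat -> c <= p i / k * (t + c)) ->
  forall n r, 0 <= n -> T n r <= A * Rpower (n / k ^ r + c) s - 1.
Proof.
  intros HM Hc HA Hci.
  assert (HA0 : 0 <= A) by (pose proof (Rpower_pos c s); nra).
  apply dn_tree_ind.
  - intros n r Hn Hle; rewrite T_leaf by assumption.
    pose proof (normalised_size_nonneg n r Hn).
    assert (Rpower c s <= Rpower (n / k ^ r + c) s) by (apply Rle_Rpower_l; lra).
    nra.
  - intros n r Hn Hlt IH; rewrite T_node by assumption.
    set (m := n / k ^ r).
    assert (Hmt : t < m)
      by (apply Rnot_le_lt; unfold m; rewrite <- normalised_size_le; lra).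
    assert (Hchild : forall i, (i <= M)%nat ->
      T (p i * (n - t * k ^ r)) (S r) <= Rpower (p i / k * (m + c)) s * A - 1).
    { intros i Hi; pose proof (IH i Hi) as IHi; rewrite child_normalised_size in IHi.
      destruct (p_range i Hi); pose proof (Hci i Hi).
      assert (Hq : 0 < p i / k) by (apply Rdiv_lt_0_compat; lra).
      assert (Rpower (p i / k * (m - t) + c) s <= Rpower (p i / k * (m + c)) s)
        by (apply Rle_Rpower_l; nra).
      fold m in IHi; nra. }
    pose proof (sum_Rle _ _ M Hchild) as Hsum.
    rewrite minus_sum, sum_cte, <- scal_sum, sum_Rpower_scaled in Hsum by lra.
    rewrite S_INR in Hsum; assert (1 <= INR M) by (apply (le_INR 1); exact HM).
    lra.
Qed.

Lemma dn_lower_invariant (a d : R) :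
  0 < d -> 0 <= a -> a * Rpower (t + d) s <= 1 ->
  (forall i, (i <= M)%nat -> p i / k * (t + d) <= d) ->
  forall n r, 0 <= n -> a * Rpower (n / k ^ r + d) s <= T n r.
Proof.
  intros Hd Ha Had Hdi.
  apply dn_tree_ind.
  - intros n r Hn Hle; rewrite T_leaf by assumption.
    pose proof (normalised_size_nonneg n r Hn); apply normalised_size_le in Hle.
    assert (Rpower (n / k ^ r + d) s <= Rpower (t + d) s) by (apply Rle_Rpower_l; lra).
    nra.
  - intros n r Hn Hlt IH; rewrite T_node by assumption.
    set (m := n / k ^ r).
    assert (Hmt : t < m)
      by (apply Rnot_le_lt; unfold m; rewrite <- normalised_size_le; lra).
    assert (Hchild : forall i, (i <= M)%nat ->
      Rpower (p i / k * (m + d)) s * a <= T (p i * (n - t * k ^ r)) (S r)).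
    { intros i Hi; pose proof (IH i Hi) as IHi; rewrite child_normalised_size in IHi.
      destruct (p_range i Hi); pose proof (Hdi i Hi).
      assert (Hq : 0 < p i / k) by (apply Rdiv_lt_0_compat; lra).
      assert (Rpower (p i / k * (m + d)) s <= Rpower (p i / k * (m - t) + d) s)
        by (apply Rle_Rpower_l; nra).
      fold m in IHi; nra. }
    pose proof (sum_Rle _ _ M Hchild) as Hsum.
    rewrite <- scal_sum, sum_Rpower_scaled in Hsum by lra; lra.
Qed.

Lemma dn_root_upper_bound :
  (1 <= M)%nat ->
  exists c2 N0, 0 < c2 /\ 0 < N0 /\
    forall N, N0 <= N -> T N 0 <= c2 * Rpower N s.
Proof.
  intros HM.
  destruct (ex_pos_lower_bound (fun i => p i / k * t) M) as [c [Hc Hcq]].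
  { intros i Hi; destruct (p_range i Hi).
    apply Rmult_lt_0_compat; [apply Rdiv_lt_0_compat|]; lra. }
  set (A := 2 / Rpower c s).
  assert (HAc : A * Rpower c s = 2)
    by (unfold A; field; apply Rgt_not_eq, Rpower_pos).
  assert (HA : 0 < A) by (apply Rdiv_lt_0_compat; [lra | apply Rpower_pos]).
  exists (A * Rpower 2 s), c; split; [apply Rmult_lt_0_compat, Rpower_pos; exact HA|].
  split; [exact Hc|]; intros N HN.
  assert (Hinv : T N 0 <= A * Rpower (N / k ^ 0 + c) s - 1).
  { apply (dn_upper_invariant A c HM Hc); [lra | | lra].
    intros i Hi; destruct (p_range i Hi); pose proof (Hcq i Hi).
    assert (0 < p i / k) by (apply Rdiv_lt_0_compat; lra); nra. }
  rewrite pow_O, Rdiv_1_r in Hinv.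
  assert (Rpower (N + c) s <= Rpower (2 * N) s) by (apply Rle_Rpower_l; lra).
  rewrite <- Rpower_mult_distr in * by lra; nra.
Qed.

Lemma dn_root_lower_bound :
  exists c1, 0 < c1 /\ forall N, 0 < N -> c1 * Rpower N s <= T N 0.
Proof.
  set (d := t / (k - 1)).
  assert (Hd : 0 < d) by (apply Rdiv_lt_0_compat; lra).
  assert (Htd : t + d = d * k) by (unfold d; field; lra).
  exists (/ Rpower (t + d) s); split; [apply Rinv_0_lt_compat, Rpower_pos|].
  intros N HN.
  assert (Hinv : / Rpower (t + d) s * Rpower (N / k ^ 0 + d) s <= T N 0).
  { apply dn_lower_invariant; [exact Hd | left; apply Rinv_0_lt_compat, Rpower_pos | | | lra].
    - rewrite Rinv_l; [lra | apply Rgt_not_eq, Rpower_pos].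
    - intros i Hi; destruct (p_range i Hi); rewrite Htd.
      replace (p i / k * (d * k)) with (p i * d) by (field; lra); nra. }
  rewrite pow_O, Rdiv_1_r in Hinv.
  assert (Rpower N s <= Rpower (N + d) s) by (apply Rle_Rpower_l; lra).
  assert (0 < / Rpower (t + d) s) by apply Rinv_0_lt_compat, Rpower_pos.
  nra.
Qed.

End DNTree.

Theorem theorem1 (t k : R) (p : nat -> R) (T : R -> nat -> R) (s : R) :
  0 < t -> 1 < k ->
  (forall i, (i <= 3)%nat -> 0 < p i < 1) ->
  sum_f_R0 p 3 = 1 ->
  DN_space t k p T ->
  sum_f_R0 (fun i => Rpower (p i) s) 3 = Rpower k s ->
  exists c1 c2 N0 : R, 0 < c1 /\ 0 < c2 /\ 0 < N0 /\
    forall N : R, N0 <= N ->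
      c1 * Rpower N s <= T N 0%nat <= c2 * Rpower N s.
Proof.
  intros Ht Hk Hp _ HT Hs.
  assert (Hs0 : 0 <= s) by exact (Rpower_exponent_nonneg k s 3 p Hk Hp Hs).
  assert (Hq : sum_f_R0 (fun i => Rpower (p i / k) s) 3 = 1).
  { apply sum_Rpower_div_eq1; [lra | | exact Hs]; intros i Hi; apply Hp, Hi. }
  pose proof (fun n r Hn => proj1 (HT n r Hn)) as Hleaf.
  pose proof (fun n r Hn => proj2 (HT n r Hn)) as Hnode.
  destruct (dn_root_lower_bound t k 3 p Ht Hk Hp s T Hs0 Hq Hleaf Hnode)
    as [c1 [Hc1 Hlow]].
  destruct (dn_root_upper_bound t k 3 p Ht Hk Hp s T Hs0 Hq Hleaf Hnode)
    as [c2 [N0 [Hc2 [HN0 Hup]]]]; [lia|].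
  exists c1, c2, N0; do 3 (split; [assumption|]).
  intros N HN; split; [apply Hlow; lra | apply Hup, HN].
Qed.
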